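(* Let $X_1,X_2,\dots$ be i.i.d. $\mathbb{Z}$-valued random variables and $S_n=\sum_{j=1}^nX_j$. For every $N\in\mathbb{N}\setminus\{1\}$, $$\frac{1}{1+\sum_{i=1}^{N-1}P\{S_i\in[0]_N\}}\le\mathbb{P}^{(N)}_{\mathcal{R}}\Big(\bigcup_{n=1}^N\{\mathcal{R}^{(N)}_n=0\}\Big)\le\frac{2}{1+\sum_{i=1}^{N-1}P\{S_i\in[0]_N\}}.$$
   Context: $X_j$ live on $(\Omega,\mathcal{F},P)$. $[y]_N=\{y+kN:k\in\mathbb{Z}\}$. For $N\in\mathbb{N}$, $X^{(N)}_0$ is uniform on $\{0,\dots,N-1\}$ under $(\Omega_N,\mathcal{F}_N,\mu_N)$; $(b\bmod N)$ is the remainder of $b\in\mathbb{Z}$ divided by $N$; $\mathcal{R}^{(N)}_n=(X^{(N)}_0+S_n\bmod N)$; $\mathbb{P}^{(N)}_{\mathcal{R}}=\mu_N\times P$. *)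

From HB Require Import structures.
From mathcomp Require Import all_boot all_order all_algebra.
From mathcomp Require Import all_classical all_reals all_analysis.
Set Implicit Arguments. Unset Strict Implicit. Unset Printing Implicit Defensive.
Import Order.TTheory GRing.Theory Num.Theory.
Local Open Scope classical_set_scope.
Local Open Scope ring_scope.

Section Defs.
Context {d : measure_display} {T : measurableType d} {R : realType}.

(* X : nat -> T -> int, with X_1, X_2, ... the relevant ones (index 0 unused). *)

Definition int_rvs (X : nat -> T -> int) : Prop :=
  forall j (k : int), (0 < j)%N -> measurable (X j @^-1` [set k]).

Definition ident_distr (P : probability T R) (X : nat -> T -> int) : Prop :=
  forall j (k : int), (0 < j)%N -> P (X j @^-1` [set k]) = P (X 1%N @^-1` [set k]).

Definition mutually_indep (P : probability T R) (X : nat -> T -> int) : Prop :=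
  forall (J : seq nat) (k : nat -> int), uniq J -> all (fun j => 0 < j)%N J ->
    P [set w | forall j, j \in J -> X j w = k j]
    = (\prod_(j <- J) P (X j @^-1` [set k j]))%E.

Definition iid (P : probability T R) (X : nat -> T -> int) : Prop :=
  [/\ int_rvs X, ident_distr P X & mutually_indep P X].

Definition S (X : nat -> T -> int) (n : nat) (w : T) : int :=
  \sum_(1 <= j < n.+1) X j w.

Definition cls (y : int) (N : nat) : set int :=
  [set z | exists k : int, z = y + k * N%:Z].

(* R^{(N)}_n = (X^{(N)}_0 + S_n mod N), on Omega_N x Omega with
   Omega_N = nat and X^{(N)}_0 the first coordinate *)
Definition Rw (X : nat -> T -> int) (N n : nat) (xw : nat * T) : int :=
  ((xw.1%:Z + S X n xw.2) %% N%:Z)%Z.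

(* P^{(N)}_R = mu_N x P, with mu_N uniform on {0,...,N-1}:
   (mu_N x P)(A) = (1/N) sum_{x<N} P(A_x)  (A_x the section at x). *)
Definition PR (P : probability T R) (N : nat) (A : set (nat * T)) : R :=
  N%:R^-1 * \sum_(x < N) fine (P [set w | A (nat_of_ord x, w)]).

End Defs.

(* Let f_x(m) be the probability that the walk x + S, started at x < N, first
   enters [0]_N at time m, and q(k) = P{S_k \in [0]_N}.  Cutting a path at its
   first entrance, and using that the increments after it are independent of
   the past and distributed like S, gives the renewal identity
     P{x + S_n \in [0]_N} = \sum_(1 <= m <= n) f_x(m) q(n - m),
   whose left side sums to 1 over x < N.  Summing it over 1 <= n <= M yields
     M = \sum_x \sum_(1 <= m <= M) f_x(m) (q(0) + ... + q(M - m)),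
   and the cases M = N and M = 2N squeeze (1 + s) F between N and 2N, where
   F = \sum_x \sum_(1 <= m <= N) f_x(m) = N P^{(N)}_R(E).  All events involved
   depend on the X_j only through their residues mod N, so independence is only
   ever used for finitely many residue values, i.e. through finite sums. *)

From HB Require Import structures.
From mathcomp Require Import all_boot all_order all_algebra.
From mathcomp Require Import all_classical all_reals all_analysis.
From mathcomp Require Import zify ring.
Set Implicit Arguments. Unset Strict Implicit. Unset Printing Implicit Defensive.
Import Order.TTheory GRing.Theory Num.Theory.
Local Open Scope classical_set_scope.
Local Open Scope ring_scope.

Definition pickle_fiber (U : countType) (A : set U) (n : nat) : set U :=
  [set z | A z /\ pickle z = n].

Lemma pickle_fiber_set0_or_set1 (U : countType) (A : set U) n :
  pickle_fiber A n = set0 \/ exists2 z, A z & pickle_fiber A n = [set z].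
Proof.
have [[z [Az pz]]|none] := pselect (exists z, pickle_fiber A n z); last first.
  by left; apply/seteqP; split => // z fz; apply: none; exists z.
right; exists z => //; apply/seteqP; split => [y [_ py]|y ->] //=.
by apply: (pcan_inj pickleK); rewrite py pz.
Qed.

Lemma bigcup_pickle_fiber (U : countType) (A : set U) :
  \bigcup_n pickle_fiber A n = A.
Proof. by apply/seteqP; split => [z [n _ []]|z Az] //; exists (pickle z). Qed.

Lemma fine_prod (R : numDomainType) (I : eqType) (s : seq I) (f : I -> \bar R) :
  {in s, forall i, f i \is a fin_num} ->
  fine (\prod_(i <- s) f i)%E = \prod_(i <- s) fine (f i).
Proof.
move=> f_fin; rewrite (eq_big_seq (fun i => (fine (f i))%:E)) ?prodEFin //.
by move=> i /f_fin/fineK.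
Qed.

Lemma modz_sum (I : Type) (s : seq I) (f : I -> int) (d : int) :
  ((\sum_(i <- s) f i) %% d = (\sum_(i <- s) (f i %% d)%Z) %% d)%Z.
Proof.
elim: s => [|i s IH]; first by rewrite !big_nil.
by rewrite !big_cons -modzDml -modzDmr IH modzDmr.
Qed.

Lemma iota_gt0 a m : all (fun j => 0 < j)%N (iota a.+1 m).
Proof. by apply/allP => j; rewrite mem_iota => /andP[/(leq_trans _)->]. Qed.

Section Probability.
Context (d : measure_display) (T : measurableType d) (R : realType)
  (P : probability T R).

Definition Pr (A : set T) : R := fine (P A).

Lemma Pr_ge0 A : 0 <= Pr A.
Proof. by rewrite fine_ge0 // measure_ge0. Qed.

Lemma Pr_setT : Pr setT = 1.
Proof. by rewrite /Pr probability_setT. Qed.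

Lemma Pr_bigsetU (I : choiceType) (s : seq I) (B : pred I) (F : I -> set T) :
  uniq s -> (forall i, measurable (F i)) -> trivIset [set` s] F ->
  Pr (\big[setU/set0]_(i <- s | B i) F i) = \sum_(i <- s | B i) Pr (F i).
Proof.
move=> + mF; elim: s => [|i s IH] /=; first by rewrite !big_nil /Pr measure0.
case/andP => i_s s_uniq disj; rewrite !big_cons.
have disj_s : trivIset [set` s] F.
  by move=> j k js ks; apply: disj; rewrite /= in_cons ?js ?ks orbT.
case: (B i); last exact: IH.
rewrite /Pr measureU //; last 2 first.
- by apply: bigsetU_measurable => j _; exact: mF.
- apply/seteqP; split => // w [Fiw].
  rewrite -bigcup_seq_cond => -[j /andP[js _] Fjw].
  have ij : i = j by apply: disj => /=; rewrite ?mem_head ?in_cons ?js ?orbT //; exists w.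
  by move: i_s; rewrite ij js.
rewrite fineD ?fin_num_measure //; first by rewrite -IH.
by apply: bigsetU_measurable => j _; exact: mF.
Qed.

End Probability.

Section IID.
Context (d : measure_display) (T : measurableType d) (R : realType)
  (P : probability T R) (X : nat -> T -> int).
Hypotheses (X_rv : int_rvs X) (X_ident : ident_distr P X)
  (X_indep : mutually_indep P X).

Lemma measurable_X_preimage j A : (0 < j)%N -> measurable (X j @^-1` A).
Proof.
move=> j_gt0; rewrite -(bigcup_pickle_fiber A) preimage_bigcup.
apply: bigcupT_measurable => n.
have [->|[z _ ->]] := pickle_fiber_set0_or_set1 A n; last exact: X_rv.
by rewrite preimage_set0.
Qed.

Lemma measurable_X_preimages (J : seq nat) (A : nat -> set int) :
  all (fun j => 0 < j)%N J -> measurable [set w | forall j, j \in J -> A j (X j w)].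
Proof.
elim: J => [_|l J IH /andP[l_gt0 /IH mJ]].
  by rewrite (_ : [set w | _] = setT) //; apply/seteqP; split.
rewrite (_ : [set w | _] = X l @^-1` A l `&` [set w | forall j, j \in J -> A j (X j w)]).
  by apply: measurableI => //; exact: measurable_X_preimage.
apply/seteqP; split => w /=.
- by move=> Aw; split => [|j jJ]; apply: Aw; rewrite in_cons ?eqxx ?jJ ?orbT.
- by case=> Alw AJw j; rewrite in_cons => /predU1P[->|/AJw].
Qed.

Local Open Scope ereal_scope.

Lemma measureI_X_preimage_series G l A : measurable G -> (0 < l)%N ->
  P (G `&` X l @^-1` A) = \sum_(0 <= n <oo) P (G `&` X l @^-1` pickle_fiber A n).
Proof.
move=> mG l_gt0; rewrite -{1}(bigcup_pickle_fiber A) preimage_bigcup setI_bigcupr.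
apply/esym/cvg_lim => //; apply: measure_sigma_additive.
  by move=> n; apply: measurableI => //; exact: measurable_X_preimage.
by move=> i j _ _ [w [[_ [_ <-]] [_ [_ <-]]]].
Qed.

Lemma measureI_X_preimage_factor G l A (c : R) : measurable G -> (0 < l)%N ->
  (forall z, A z -> P (G `&` X l @^-1` [set z]) = c%:E * P (X l @^-1` [set z])) ->
  P (G `&` X l @^-1` A) = c%:E * P (X l @^-1` A).
Proof.
move=> mG l_gt0 G_point.
rewrite measureI_X_preimage_series // -[X l @^-1` A]setTI.
rewrite measureI_X_preimage_series // -nneseriesZl; last first.
  by move=> n _; exact: measure_ge0.
apply/congr_lim/funext => m; apply: eq_bigr => n _; rewrite setTI.
have [->|[z Az ->]] := pickle_fiber_set0_or_set1 A n; last exact: G_point.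
by rewrite preimage_set0 setI0 measure0 mule0.
Qed.

Definition cylinder (L : seq nat) (A : nat -> set int) (J : seq nat) (k : nat -> int) :
  set T := [set w | (forall j, j \in L -> A j (X j w)) /\ (forall j, j \in J -> X j w = k j)].

Lemma cylinder_cons L A J k l :
  cylinder (l :: L) A J k = cylinder L A J k `&` X l @^-1` A l.
Proof.
apply/seteqP; split => w /=.
  by case=> AL kJ; split; [split => // j jL|]; apply: AL; rewrite in_cons ?jL ?eqxx ?orbT.
by case=> -[AL kJ] Al; split => // j; rewrite in_cons => /predU1P[->|/AL].
Qed.

Lemma cylinder_setI_point L A J k l z : l \notin J ->
  cylinder L A J k `&` X l @^-1` [set z] =
  cylinder L A (l :: J) (fun j => if j == l then z else k j).
Proof.
move=> lJ; apply/seteqP; split => w /=.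
  case=> -[AL kJ] Xlz; split => // j; rewrite in_cons.
  by case: eqP => [-> _|_ /= /kJ].
case=> AL kJ; split; last by rewrite (kJ l) ?mem_head // eqxx.
split => // j jJ; rewrite (kJ j) ?in_cons ?jJ ?orbT //.
by case: eqP => // jl; move: lJ; rewrite -jl jJ.
Qed.

Lemma measurable_cylinder L A J k :
  all (fun j => 0 < j)%N (L ++ J) -> measurable (cylinder L A J k).
Proof.
rewrite all_cat => /andP[L_gt0 J_gt0].
rewrite (_ : cylinder L A J k = [set w | forall j, j \in L -> A j (X j w)] `&`
  [set w | forall j, j \in J -> [set k j] (X j w)]); last by apply/seteqP; split.
by apply: measurableI;
  [exact: measurable_X_preimages | exact: (measurable_X_preimages (fun j => [set k j]))].
Qed.

Lemma measure_cylinder L A J k :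
  uniq (L ++ J) -> all (fun j => 0 < j)%N (L ++ J) -> P (cylinder L A J k) =
  \prod_(j <- L) P (X j @^-1` A j) * \prod_(j <- J) P (X j @^-1` [set k j]).
Proof.
elim: L J k => [|l L IH] J k /=.
  move=> J_uniq J_gt0; rewrite big_nil mul1e -X_indep //.
  by congr (P _); apply/seteqP; split => w /= => [[]|] //.
case/andP => lLJ LJ_uniq /andP[l_gt0 LJ_gt0].
have lJ : l \notin J by move: lLJ; rewrite mem_cat negb_or => /andP[].
have [L_gt0 J_gt0] : all (fun j => 0 < j)%N L /\ all (fun j => 0 < j)%N J.
  by apply/andP; rewrite -all_cat.
have prod_fin (B : nat -> set int) (K : seq nat) : all (fun j => 0 < j)%N K ->
    \prod_(j <- K) P (X j @^-1` B j) \is a fin_num.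
  move=> /allP K_gt0; rewrite big_seq; apply: prode_fin_num => j /K_gt0 j_gt0.
  exact/fin_num_measure/measurable_X_preimage.
have c_fin : \prod_(j <- L) P (X j @^-1` A j) * \prod_(j <- J) P (X j @^-1` [set k j])
    \is a fin_num by rewrite fin_numM ?prod_fin.
rewrite cylinder_cons big_cons -muleA muleC -(fineK c_fin).
apply: measureI_X_preimage_factor => // [|z Alz]; first exact: measurable_cylinder.
rewrite cylinder_setI_point // IH; last 2 first.
- by rewrite -cat1s uniq_catCA cat1s /= lLJ.
- by rewrite all_cat /= L_gt0 l_gt0 J_gt0.
rewrite fineK // big_cons eqxx muleCA [RHS]muleC; congr (_ * (_ * _)).
rewrite big_seq [RHS]big_seq; apply: eq_bigr => j jJ.
by case: eqP => // jl; move: lJ; rewrite -jl jJ.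
Qed.

Lemma X_preimage_ident j A : (0 < j)%N -> P (X j @^-1` A) = P (X 1 @^-1` A).
Proof.
move=> j_gt0; rewrite -[X j @^-1` A]setTI -[X 1 @^-1` A]setTI.
rewrite !measureI_X_preimage_series //; apply/congr_lim/funext => m.
apply: eq_bigr => n _; rewrite !setTI.
by have [->|[z _ ->]] := pickle_fiber_set0_or_set1 A n; rewrite ?preimage_set0 ?X_ident.
Qed.

Local Close Scope ereal_scope.

Section Residues.
Variable N : nat.
Hypothesis N_gt0 : (0 < N)%N.

Lemma absz_modz_lt (z : int) : (`|(z %% N%:Z)%Z| < N)%N.
Proof.
have N_neq0 : N%:Z != 0 by rewrite eqz_nat -lt0n.
by rewrite -ltz_nat gez0_abs ?modz_ge0 ?ltz_pmod ?ltz_nat.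
Qed.

Definition resid (z : int) : 'I_N := Ordinal (absz_modz_lt z).

Lemma residE z : (resid z : nat)%:Z = (z %% N%:Z)%Z.
Proof. by rewrite /= gez0_abs // modz_ge0 // eqz_nat -lt0n. Qed.

Definition resid_law (t : 'I_N) : R := Pr P [set w | resid (X 1 w) = t].

Lemma Pr_resids (J : seq nat) (t : nat -> 'I_N) :
  uniq J -> all (fun j => 0 < j)%N J ->
  Pr P [set w | forall j, j \in J -> resid (X j w) = t j] = \prod_(j <- J) resid_law (t j).
Proof.
move=> J_uniq J_gt0.
have := @measure_cylinder J (fun j => [set z | resid z = t j]) [::] (fun=> 0).
rewrite cats0 big_nil mule1 => /(_ J_uniq J_gt0) PJ.
rewrite /Pr (_ : [set w | _] = cylinder J (fun j => [set z | resid z = t j]) [::] (fun=> 0));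
  last by apply/seteqP; split => w // [].
rewrite PJ fine_prod => [|j /(allP J_gt0) j_gt0]; last first.
  exact/fin_num_measure/measurable_X_preimage.
by apply: eq_big_seq => j /(allP J_gt0) j_gt0; rewrite X_preimage_ident.
Qed.

Definition block (a m : nat) (w : T) : 'rV['I_N]_m := \row_(i < m) resid (X (a + i.+1) w).

Definition block_weight m (r : 'rV['I_N]_m) : R := \prod_(i < m) resid_law (r ord0 i).

Definition row_nth m (r : 'rV['I_N]_m) (i : nat) : 'I_N :=
  if insub i is Some i' then r ord0 i' else Ordinal N_gt0.

Lemma row_nth_ord m (r : 'rV['I_N]_m) (i : 'I_m) : row_nth r i = r ord0 i.
Proof. by rewrite /row_nth valK. Qed.

Lemma block_eq_set a m (r : 'rV['I_N]_m) : [set w | block a m w = r] =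
  [set w | forall j, j \in iota a.+1 m -> resid (X j w) = row_nth r (j - a.+1)].
Proof.
apply/seteqP; split => w /=.
  move=> <- j; rewrite mem_iota => /andP[aj jam].
  have lt_jm : (j - a.+1 < m)%N by lia.
  rewrite -[(j - a.+1)%N]/(nat_of_ord (Ordinal lt_jm)) row_nth_ord mxE /=.
  by congr (resid (X _ w)); lia.
move=> r_at; apply/rowP => i; have lt_im := ltn_ord i.
rewrite mxE r_at ?mem_iota; last lia.
by rewrite (_ : (a + i.+1 - a.+1 = i)%N) ?row_nth_ord //; lia.
Qed.

Lemma Pr_block a m (r : 'rV['I_N]_m) : Pr P [set w | block a m w = r] = block_weight r.
Proof.
rewrite block_eq_set Pr_resids ?iota_uniq ?iota_gt0 //.
rewrite -[a.+1]addn0 iotaDl big_map.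
rewrite (_ : iota 0 m = index_iota 0 m) ?big_mkord; last by rewrite /index_iota subn0.
by apply: eq_bigr => i _; rewrite addn0 addKn row_nth_ord.
Qed.

Lemma block_event_bigsetU a m (f : pred 'rV['I_N]_m) :
  [set w | f (block a m w)] = \big[setU/set0]_(r | f r) [set w | block a m w = r].
Proof.
rewrite -bigcup_seq_cond; apply/seteqP; split => [w fw|w [r /andP[_ fr] /= ->]] //.
by exists (block a m w) => //=; rewrite mem_index_enum.
Qed.

Lemma measurable_block_eq a m (r : 'rV['I_N]_m) : measurable [set w | block a m w = r].
Proof.
rewrite block_eq_set.
exact: (measurable_X_preimages (fun j z => resid z = row_nth r (j - a.+1)) (iota_gt0 a m)).
Qed.

Lemma measurable_block_event a m (f : pred 'rV['I_N]_m) :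
  measurable [set w | f (block a m w)].
Proof.
by rewrite block_event_bigsetU; apply: bigsetU_measurable => r _; exact: measurable_block_eq.
Qed.

Lemma Pr_block_event a m (f : pred 'rV['I_N]_m) :
  Pr P [set w | f (block a m w)] = \sum_(r | f r) block_weight r.
Proof.
rewrite block_event_bigsetU Pr_bigsetU ?index_enum_uniq //.
- by apply: eq_bigr => r _; exact: Pr_block.
- by move=> r; exact: measurable_block_eq.
- by move=> r r' _ _ [w [/= <- <-]].
Qed.

Lemma lsubmx_block a m k w : lsubmx (block a (m + k) w) = block a m w.
Proof. by apply/rowP => i; rewrite !mxE. Qed.

Lemma rsubmx_block a m k w : rsubmx (block a (m + k) w) = block (a + m) k w.
Proof. by apply/rowP => i; rewrite !mxE /= !addnS addnA. Qed.

Lemma block_weight_row_mx m k (r1 : 'rV['I_N]_m) (r2 : 'rV['I_N]_k) :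
  block_weight (row_mx r1 r2) = block_weight r1 * block_weight r2.
Proof.
by rewrite /block_weight big_split_ord; congr (_ * _); apply: eq_bigr => i _;
  rewrite (row_mxEl, row_mxEr).
Qed.

Lemma Pr_blocks_event a m k (f1 : pred 'rV['I_N]_m) (f2 : pred 'rV['I_N]_k) :
  Pr P [set w | f1 (block a m w) && f2 (block (a + m) k w)] =
  (\sum_(r | f1 r) block_weight r) * (\sum_(r | f2 r) block_weight r).
Proof.
have -> : [set w | f1 (block a m w) && f2 (block (a + m) k w)] =
    [set w | [pred r | f1 (lsubmx r) && f2 (rsubmx r)] (block a (m + k) w)].
  by apply/seteqP; split => w; rewrite /= lsubmx_block rsubmx_block.
rewrite Pr_block_event (reindex (fun rr => row_mx rr.1 rr.2)) /=; last first.
  by exists (fun r => (lsubmx r, rsubmx r)) => [[r1 r2]|r] _; rewrite ?row_mxKl ?row_mxKr ?hsubmxK.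
rewrite mulr_suml; under [RHS]eq_bigr => r1 _ do rewrite mulr_sumr.
rewrite pair_big_dep; apply: eq_big => [[r1 r2]|[r1 r2] _] /=.
  by rewrite row_mxKl row_mxKr.
exact: block_weight_row_mx.
Qed.

Definition hit (x n : nat) (w : T) : bool := Rw X N n (x, w) == 0.

Definition first_hit (x m : nat) : set T :=
  [set w | hit x m w /\ forall j, (0 < j < m)%N -> ~~ hit x j w].

Definition hit_within (x n : nat) : set T :=
  [set w | exists2 m, (0 < m <= n)%N & hit x m w].

Definition block_hit (x : nat) m (r : 'rV['I_N]_m) (j : nat) : bool :=
  ((x%:Z + \sum_(i < m | (i < j)%N) (r ord0 i : nat)%:Z) %% N%:Z)%Z == 0.

Definition first_block_hit (x : nat) m (r : 'rV['I_N]_m) : bool :=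
  block_hit x r m && [forall i : 'I_m, (0 < i)%N ==> ~~ block_hit x r i].

Lemma S_ord n w : S X n w = \sum_(i < n) X i.+1 w.
Proof. by rewrite /S big_add1 big_mkord. Qed.

Lemma sum_block_mod a m w j : (j <= m)%N ->
  ((\sum_(i < m | (i < j)%N) (block a m w ord0 i : nat)%:Z) %% N%:Z =
   (\sum_(i < j) X (a + i.+1) w) %% N%:Z)%Z.
Proof.
move=> le_jm; under eq_bigr do rewrite mxE.
rewrite -(big_ord_widen m (fun i => (resid (X (a + i.+1) w) : nat)%:Z) le_jm).
rewrite modz_sum [RHS]modz_sum; congr (_ %% _)%Z.
by apply: eq_bigr => i _; rewrite residE modz_mod.
Qed.

Lemma hit_block x m w j : (j <= m)%N -> block_hit x (block 0 m w) j = hit x j w.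
Proof.
move=> le_jm; rewrite /block_hit /hit /Rw /= -modzDmr sum_block_mod // modzDmr S_ord.
by under eq_bigr do rewrite add0n.
Qed.

Lemma S_split m k w : S X (m + k) w = S X m w + \sum_(i < k) X (m + i.+1) w.
Proof. by rewrite !S_ord big_split_ord; under [X in _ + X]eq_bigr do rewrite addnS. Qed.

Lemma hit_block_shift x m k w :
  hit x m w -> block_hit 0 (block m k w) k = hit x (m + k) w.
Proof.
rewrite /hit /Rw /= => /eqP hit_m; rewrite /block_hit add0r sum_block_mod //.
by rewrite S_split addrA -modzDml hit_m add0r.
Qed.

Lemma first_hit_block x m : first_hit x m = [set w | first_block_hit x (block 0 m w)].
Proof.
apply/seteqP; split => w /=; rewrite /first_block_hit hit_block //.
  case=> hit_m not_hit; rewrite hit_m /=; apply/forallP => i; apply/implyP => i_gt0.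
  rewrite hit_block; last exact: ltnW.
  by apply: not_hit; rewrite i_gt0 ltn_ord.
case/andP => hit_m /forallP not_hit; split => // j /andP[j_gt0 lt_jm].
by have := not_hit (Ordinal lt_jm); rewrite /= j_gt0 hit_block // ltnW.
Qed.

Lemma measurable_hit x n : measurable [set w | hit x n w].
Proof.
rewrite (_ : [set w | _] = [set w | block_hit x (block 0 n w) n]).
  exact: (measurable_block_event 0 (fun r => block_hit x r n)).
by apply/seteqP; split => w /=; rewrite hit_block.
Qed.

Lemma measurable_first_hit x m : measurable (first_hit x m).
Proof.
by rewrite first_hit_block; exact: (measurable_block_event 0 (fun r => first_block_hit x r)).
Qed.

Lemma measurable_hit_within x n : measurable (hit_within x n).
Proof.
rewrite (_ : hit_within x n = \big[setU/set0]_(1 <= m < n.+1) [set w | hit x m w]).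
  by apply: bigsetU_measurable => m _; exact: measurable_hit.
rewrite -bigcup_seq; apply/seteqP; split => w [m].
  by move=> m_in hit_m; exists m => //=; rewrite mem_index_iota ltnS.
by rewrite /= mem_index_iota ltnS => m_in hit_m; exists m.
Qed.

Lemma Pr_first_hit_then_hit x m k :
  Pr P (first_hit x m `&` [set w | hit x (m + k) w]) =
  Pr P (first_hit x m) * Pr P [set w | hit 0 k w].
Proof.
have -> : first_hit x m `&` [set w | hit x (m + k) w] =
    [set w | first_block_hit x (block 0 m w) && block_hit 0 (block (0 + m) k w) k].
  rewrite add0n first_hit_block; apply/seteqP; split => w /=.
    case=> first_w; have hit_m : hit x m w by case/andP: first_w; rewrite hit_block.
    by rewrite first_w (hit_block_shift k hit_m).
  case/andP=> first_w; have hit_m : hit x m w by case/andP: first_w; rewrite hit_block.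
  by rewrite first_w (hit_block_shift k hit_m).
rewrite (Pr_blocks_event 0 (fun r => first_block_hit x r) (fun r => block_hit 0 r k)).
rewrite first_hit_block Pr_block_event; congr (_ * _).
rewrite (_ : [set w | hit 0 k w] = [set w | block_hit 0 (block 0 k w) k]).
  by rewrite (Pr_block_event 0 (fun r => block_hit 0 r k)).
by apply/seteqP; split => w /=; rewrite hit_block.
Qed.

Lemma first_hit_le x m k w :
  first_hit x m w -> (0 < k)%N -> hit x k w -> (m <= k)%N.
Proof.
case=> _ not_hit k_gt0 hit_k; rewrite leqNgt; apply/negP => lt_km.
by have := not_hit k; rewrite k_gt0 lt_km hit_k => /(_ isT).
Qed.

Lemma first_hit_trivIset x (D : set nat) : D `<=` [set m | (0 < m)%N] ->
  trivIset D (first_hit x).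
Proof.
move=> D_gt0 i j /D_gt0 /= i_gt0 /D_gt0 /= j_gt0 [w [Fi Fj]].
by apply/eqP; rewrite eqn_leq (first_hit_le Fi j_gt0 Fj.1) (first_hit_le Fj i_gt0 Fi.1).
Qed.

Lemma exists_first_hit x n w :
  (0 < n)%N -> hit x n w -> exists2 m, (0 < m)%N & first_hit x m w.
Proof.
move=> n_gt0 hit_n; have ex : exists j, (0 < j)%N && hit x j w by exists n; rewrite n_gt0.
case: (ex_minnP ex) => m /andP[m_gt0 hit_m] min_m; exists m => //.
split => // j /andP[j_gt0 lt_jm]; apply: contraTN lt_jm => hit_j.
by rewrite -leqNgt min_m // j_gt0.
Qed.

Lemma Pr_first_hit_decomp x n (A : set T) : measurable A -> A `<=` hit_within x n ->
  Pr P A = \sum_(1 <= m < n.+1) Pr P (first_hit x m `&` A).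
Proof.
move=> mA A_hit; rewrite -Pr_bigsetU ?iota_uniq //; last 2 first.
- by move=> m; apply: measurableI => //; exact: measurable_first_hit.
- apply: trivIset_setIr; apply: first_hit_trivIset => m.
  by rewrite /= mem_index_iota => /andP[].
congr (Pr P _); rewrite -bigcup_seq; apply/seteqP; split => [w Aw|w [m _ []]] //.
case: (A_hit w Aw) => k /andP[k_gt0 le_kn] hit_k.
have [m m_gt0 first_m] := exists_first_hit k_gt0 hit_k.
exists m => //=; rewrite mem_index_iota m_gt0 ltnS.
exact: leq_trans (first_hit_le first_m k_gt0 hit_k) le_kn.
Qed.

Lemma sum_Pr_hit n : \sum_(x < N) Pr P [set w | hit x n w] = 1.
Proof.
rewrite -(Pr_setT P) -Pr_bigsetU ?index_enum_uniq //; last 2 first.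
- by move=> x; exact: measurable_hit.
- move=> x y _ _ [w]; rewrite /= /hit /Rw /= => -[/eqP hx /eqP hy]; apply: val_inj.
  have : ((x%:Z + S X n w) == (y%:Z + S X n w) %[mod N%:Z])%Z by rewrite hx hy.
  by rewrite eqz_modDr !modz_small ?ltz_nat ?ltn_ord // => /eqP[].
congr (Pr P _); apply/seteqP; split => // w _; rewrite -bigcup_seq.
exists (resid (- S X n w)); first by rewrite /= mem_index_enum.
by rewrite /= /hit /Rw /= residE modzDml addNr mod0z.
Qed.

Lemma Pr_hit_renewal x n : (0 < n)%N -> Pr P [set w | hit x n w] =
  \sum_(1 <= m < n.+1) Pr P (first_hit x m) * Pr P [set w | hit 0 (n - m) w].
Proof.
move=> n_gt0; rewrite (@Pr_first_hit_decomp x n _ (measurable_hit x n)); last first.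
  by move=> w hit_n; exists n; rewrite ?n_gt0 ?leqnn.
apply: eq_big_nat => m /andP[_ le_mn].
by rewrite -Pr_first_hit_then_hit subnKC // -ltnS.
Qed.

Lemma renewal_identity n : (0 < n)%N -> \sum_(x < N) \sum_(1 <= m < n.+1)
  Pr P (first_hit x m) * Pr P [set w | hit 0 (n - m) w] = 1.
Proof.
by move=> n_gt0; rewrite -(sum_Pr_hit n); apply: eq_bigr => x _; rewrite Pr_hit_renewal.
Qed.

Lemma Pr_hit_within x n :
  Pr P (hit_within x n) = \sum_(1 <= m < n.+1) Pr P (first_hit x m).
Proof.
rewrite (@Pr_first_hit_decomp x n _ (measurable_hit_within x n)) //.
apply: eq_big_nat => m /andP[m_gt0 lt_mn]; congr (Pr P _).
apply/seteqP; split => [w []//|w first_w]; split => //.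
by exists m; [rewrite m_gt0 -ltnS | case: first_w].
Qed.

Lemma PR_hit_within :
  PR P N [set xw | exists n, (1 <= n <= N)%N /\ Rw X N n xw = 0] =
  N%:R^-1 * \sum_(x < N) Pr P (hit_within x N).
Proof.
congr (_ * _); apply: eq_bigr => x _; congr (fine (P _)).
by apply/seteqP; split => w /= => [[n [n_in /eqP]]|[n n_in /eqP]]; exists n.
Qed.

Lemma hit0_cls k : [set w | hit 0 k w] = [set w | S X k w \in cls 0 N].
Proof.
apply/seteqP; split => w; rewrite /= /hit /Rw /= add0r in_setE /cls /=.
  by move/eqP/dvdz_mod0P/dvdzP => [q ->]; exists q; rewrite add0r.
by case=> q ->; apply/eqP/dvdz_mod0P/dvdzP; exists q; rewrite add0r.
Qed.

End Residues.
End IID.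

Lemma sum_triangle (R : nmodType) (g : nat -> nat -> R) M :
  \sum_(1 <= n < M.+1) \sum_(1 <= m < n.+1) g m (n - m)%N =
  \sum_(1 <= m < M.+1) \sum_(i < (M - m).+1) g m i.
Proof.
elim: M => [|M IH]; first by rewrite !big_geq.
rewrite big_nat_recr //= IH; under [RHS]eq_bigr => m _ do rewrite big_ord_recr /=.
rewrite big_split /=; congr (_ + _).
rewrite [RHS]big_nat_recr //= subnn big_ord0 addr0.
by apply: eq_big_nat => m /andP[_ le_mM]; rewrite subSn.
Qed.

Section RenewalBounds.
Variables (R : realFieldType) (I : finType) (f : I -> nat -> R) (q : nat -> R).
Hypotheses (f_ge0 : forall x m, 0 <= f x m) (q_ge0 : forall i, 0 <= q i).
Hypothesis renewal :
  forall n, (0 < n)%N -> \sum_x \sum_(1 <= m < n.+1) f x m * q (n - m)%N = 1.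

Lemma sum_ord_le k l : (k <= l)%N -> \sum_(i < k) q i <= \sum_(i < l) q i.
Proof.
move=> le_kl; rewrite (big_ord_widen l) // [leRHS](bigID (fun i : 'I_l => (i < k)%N)) /=.
by rewrite lerDl sumr_ge0.
Qed.

Lemma renewal_sum M :
  M%:R = \sum_x \sum_(1 <= m < M.+1) f x m * \sum_(i < (M - m).+1) q i.
Proof.
have -> : M%:R = \sum_(1 <= n < M.+1) (1 : R) by rewrite sumr_const_nat subn1.
under eq_big_nat => n /andP[n_gt0 _] do rewrite -(renewal n_gt0).
rewrite exchange_big /=; apply: eq_bigr => x _; rewrite (sum_triangle (fun m i => f x m * q i)).
by apply: eq_bigr => m _; rewrite mulr_sumr.
Qed.

Lemma renewal_bounds K :
  K%:R <= (\sum_(i < K) q i) * \sum_x \sum_(1 <= m < K.+1) f x m <= (2 * K)%:R.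
Proof.
rewrite mulr_sumr; under eq_bigr do rewrite mulr_sumr.
apply/andP; split.
  rewrite renewal_sum; apply: ler_sum => x _; apply: ler_sum_nat => m /andP[m_gt0 le_mK].
  by rewrite mulrC ler_wpM2r // sum_ord_le //; lia.
rewrite renewal_sum; apply: ler_sum => x _.
rewrite [leRHS](big_cat_nat _ (n:=K.+1)) //=; last lia.
rewrite -[leLHS]addr0 lerD //; last first.
  by apply: sumr_ge0 => m _; rewrite mulr_ge0 ?sumr_ge0.
apply: ler_sum_nat => m /andP[m_gt0 le_mK].
by rewrite [leRHS]mulrC ler_wpM2r // sum_ord_le //; lia.
Qed.

End RenewalBounds.

Lemma mul_bounds_inv (R : realFieldType) (a e n : R) : 0 < a -> 0 < n ->
  n <= a * e <= 2 * n -> a^-1 <= n^-1 * e <= 2 / a.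
Proof.
move=> a_gt0 n_gt0 /andP[lo hi]; have [a_neq0 n_neq0] := (gt_eqF a_gt0, gt_eqF n_gt0).
have an_inv_ge0 : 0 <= (a * n)^-1 by rewrite invr_ge0 mulr_ge0 ?ltW.
apply/andP; split; rewrite -subr_ge0.
  rewrite (_ : _ - _ = (a * n)^-1 * (a * e - n)); last by field; rewrite n_neq0 a_neq0.
  by rewrite mulr_ge0 // subr_ge0.
rewrite (_ : _ - _ = (a * n)^-1 * (2 * n - a * e)); last by field; rewrite n_neq0 a_neq0.
by rewrite mulr_ge0 // subr_ge0.
Qed.

Theorem corollary2 (d : measure_display) (T : measurableType d) (R : realType)
  (P : probability T R) (X : nat -> T -> int) (N : nat) :
  iid P X -> (2 <= N)%N ->
  let s := \sum_(1 <= i < N) fine (P [set w | S X i w \in cls 0 N]) in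
  let E := [set xw : nat * T | exists n : nat, (1 <= n <= N)%N /\ Rw X N n xw = 0] in
  (1 + s)^-1 <= PR P N E <= 2 / (1 + s).
Proof.
move=> [X_rv X_ident X_indep] N_ge2; cbv zeta; set s := \sum_(1 <= i < N) _.
have N_gt0 : (0 < N)%N := ltnW N_ge2.
pose q i := Pr P [set w | S X i w \in cls 0 N].
pose f (x : 'I_N) m := Pr P (first_hit X N x m).
have renewal n : (0 < n)%N -> \sum_x \sum_(1 <= m < n.+1) f x m * q (n - m)%N = 1.
  move=> n_gt0; rewrite -(renewal_identity X_rv X_ident X_indep N_gt0 n_gt0).
  by apply: eq_bigr => x _; apply: eq_bigr => m _; rewrite hit0_cls.
have q0 : q 0%N = 1.
  rewrite /q (_ : [set w | _] = setT) ?Pr_setT //; apply/seteqP; split => // w _.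
  by rewrite /= /S big_geq // in_setE; exists 0.
have s_ge0 : 0 <= s by apply: sumr_ge0 => i _; exact: Pr_ge0.
have q_sum : \sum_(i < N) q i = 1 + s by rewrite -(big_mkord xpredT) (big_ltn N_gt0) q0.
have := @renewal_bounds _ _ f q (fun x m => Pr_ge0 P _) (fun i => Pr_ge0 P _) renewal N.
rewrite q_sum natrM => bounds.
rewrite PR_hit_within; under eq_bigr do rewrite (Pr_hit_within P X_rv N_gt0).
by apply: mul_bounds_inv; rewrite ?ltr0n // ltr_wpDr.
Qed.
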